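(* Let $\phi$ be a propositional team formula (built from literals $p,\neg p$, the constant $\bot$, the constant $NE$, dependence atoms $=\!(\overline\alpha,\beta)$, inclusion atoms $\overline\alpha\subseteq\overline\alpha'$ and independence atoms $\overline\alpha\perp\overline\beta$ over classical propositional formulas, using $\wedge,\otimes,\vee,\circledast$), let $p\in Prop$, and suppose $\phi$ is downward closed. Then $\phi\models \phi[p|\top]\otimes\phi[p|\bot]$, i.e. every team satisfying $\phi$ satisfies $\phi[p|\top]\otimes\phi[p|\bot]$.
   Context: $Prop$ is a nonempty set of propositional letters. A team is a set $X$ of valuations $s:Prop\to\{0,1\}$. Semantics: $X\models\bot$ iff $X=\emptyset$; $X\models p$ iff $s(p)=1$ for all $s\in X$; $X\models\neg p$ iff $s(p)=0$ for all $s\in X$; $X\models NE$ iff $X\neq\emptyset$; $X\models\phi_1\wedge\phi_2$ iff $X\models\phi_1$ and $X\models\phi_2$; $X\models\phi_1\otimes\phi_2$ iff there are $X_1,X_2$ with $X=X_1\cup X_2$, $X_1\models\phi_1$, $X_2\models\phi_2$; $X\models\phi_1\vee\phi_2$ iff $X\models\phi_1$ or $X\models\phi_2$; $X\models\phi_1\circledast\phi_2$ iff $X=\emptyset$ or there are nonempty $X_1,X_2$ with $X=X_1\cup X_2$, $X_1\models\phi_1$, $X_2\models\phi_2$. For classical propositional formulas $\alpha$, $s(\alpha)\in\{0,1\}$ is the usual truth value and $s(\overline\alpha)$ the tuple of values; $X\models{=}(\overline\alpha,\beta)$ iff for all $s,s'\in X$, $s(\overline\alpha)=s'(\overline\alpha)$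 implies $s(\beta)=s'(\beta)$; $X\models\overline\alpha\subseteq\overline\alpha'$ iff for every $s\in X$ there is $s'\in X$ with $s(\overline\alpha)=s'(\overline\alpha')$; $X\models\overline\alpha\perp\overline\beta$ iff for all $s,s'\in X$ there is $s''\in X$ with $s''(\overline\alpha)=s(\overline\alpha)$ and $s''(\overline\beta)=s'(\overline\beta)$. $\top$ denotes $q\otimes\neg q$ for a letter $q$ (true in every team). The substitution $\phi[p|\top]$ is defined inductively: $p\mapsto\top$, $\neg p\mapsto\bot$, $\bot\mapsto\bot$, other literals and $NE$ unchanged, commuting with all connectives, and inside atoms the classical formulas are substituted classically ($p$ replaced by a true constant); $\phi[p|\bot]$ is analogous with $p\mapsto\bot$, $\neg p\mapsto\top$. A formula $\phi$ is downward closed if $X\models\phi$ and $Y\subseteq X$ imply $Y\models\phi$. *)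

From Stdlib Require Import List Bool Classical ClassicalEpsilon.
Import ListNotations.
Set Implicit Arguments.

Section TeamLogic.
Variable L : Type.

Definition valuation := L -> bool.
Definition team := valuation -> Prop.

Inductive cform :=
| CVar : L -> cform
| CTrue : cform
| CFalse : cform
| CNeg : cform -> cform
| CAnd : cform -> cform -> cform
| COr : cform -> cform -> cform.

Fixpoint cval (s : valuation) (a : cform) : bool :=
  match a with
  | CVar p => s p
  | CTrue => true
  | CFalse => false
  | CNeg a => negb (cval s a)
  | CAnd a b => cval s a && cval s b
  | COr a b => cval s a || cval s b
  end.

Definition cvals (s : valuation) (xs : list cform) : list bool := map (cval s) xs.

Inductive tform :=
| TLit : L -> tform
| TNLit : L -> tform
| TBot : tform
| TNE : tform
| TDep : list cform -> cform -> tform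
| TInc : list cform -> list cform -> tform
| TInd : list cform -> list cform -> tform
| TAnd : tform -> tform -> tform
| TTensor : tform -> tform -> tform
| TOr : tform -> tform -> tform
| TCirc : tform -> tform -> tform.

Definition sub_team (Y X : team) := forall s, Y s -> X s.
Definition union_eq (X X1 X2 : team) := forall s, X s <-> (X1 s \/ X2 s).
Definition empty_team (X : team) := forall s, ~ X s.

Fixpoint sat (X : team) (f : tform) : Prop :=
  match f with
  | TLit p => forall s, X s -> s p = true
  | TNLit p => forall s, X s -> s p = false
  | TBot => empty_team X
  | TNE => exists s, X s
  | TDep xs b => forall s s', X s -> X s' -> cvals s xs = cvals s' xs ->
                  cval s b = cval s' b
  | TInc xs ys => forall s, X s -> exists s', X s' /\ cvals s xs = cvals s' ys
  | TInd xs ys => forall s s', X s -> X s' -> exists s'', X s'' /\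
                  cvals s'' xs = cvals s xs /\ cvals s'' ys = cvals s' ys
  | TAnd f g => sat X f /\ sat X g
  | TTensor f g => exists X1 X2, union_eq X X1 X2 /\ sat X1 f /\ sat X2 g
  | TOr f g => sat X f \/ sat X g
  | TCirc f g => empty_team X \/
      exists X1 X2, (exists s, X1 s) /\ (exists s, X2 s) /\
        union_eq X X1 X2 /\ sat X1 f /\ sat X2 g
  end.

Definition downward_closed (f : tform) : Prop :=
  forall X Y : team, sat X f -> sub_team Y X -> sat Y f.

Definition entails (f g : tform) : Prop := forall X : team, sat X f -> sat X g.

Definition leq_dec (a b : L) : {a = b} + {a <> b} :=
  excluded_middle_informative (a = b).

Fixpoint csubst (p : L) (c : cform) (a : cform) : cform :=
  match a with
  | CVar r => if leq_dec r p then c else CVar r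
  | CTrue => CTrue
  | CFalse => CFalse
  | CNeg a => CNeg (csubst p c a)
  | CAnd a b => CAnd (csubst p c a) (csubst p c b)
  | COr a b => COr (csubst p c a) (csubst p c b)
  end.

Definition ttop (q : L) : tform := TTensor (TLit q) (TNLit q).

(* phi[p|top] (b = true) and phi[p|bot] (b = false), with top = q (x) ~q *)
Fixpoint tsubst (q p : L) (b : bool) (f : tform) : tform :=
  let c := if b then CTrue else CFalse in
  match f with
  | TLit r => if leq_dec r p then (if b then ttop q else TBot) else TLit r
  | TNLit r => if leq_dec r p then (if b then TBot else ttop q) else TNLit r
  | TBot => TBot
  | TNE => TNE
  | TDep xs y => TDep (map (csubst p c) xs) (csubst p c y)
  | TInc xs ys => TInc (map (csubst p c) xs) (map (csubst p c) ys)
  | TInd xs ys => TInd (map (csubst p c) xs) (map (csubst p c) ys)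
  | TAnd f g => TAnd (tsubst q p b f) (tsubst q p b g)
  | TTensor f g => TTensor (tsubst q p b f) (tsubst q p b g)
  | TOr f g => TOr (tsubst q p b f) (tsubst q p b g)
  | TCirc f g => TCirc (tsubst q p b f) (tsubst q p b g)
  end.

End TeamLogic.

(* Split a team X satisfying phi into the part where p is true and the part
   where p is false; both satisfy phi by downward closure.  On a team where p
   has the constant value b, phi and phi[p|b] are satisfied alike: literals
   of p become either top (true in every team) or bottom (and the team, being
   constant on p, is then empty), and the classical formulas inside atoms keep
   their value under the substitution. *)
From Stdlib Require Import List.
Set Implicit Arguments.

Section Substitution.
Variables (L : Type) (q p : L).

Definition restrict (X : team L) (b : bool) : team L := fun s => X s /\ s p = b.

Lemma restrict_sub (X : team L) (b : bool) : sub_team (restrict X b) X.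
Proof. intros s [Hs _]; exact Hs. Qed.

Lemma restrict_const (X : team L) (b : bool) :
  forall s, restrict X b s -> s p = b.
Proof. intros s [_ Hb]; exact Hb. Qed.

Lemma union_restrict (X : team L) : union_eq X (restrict X true) (restrict X false).
Proof.
  intro s; unfold restrict; destruct (s p); intuition discriminate.
Qed.

Lemma sat_ttop (Y : team L) : sat Y (ttop q).
Proof.
  exists (fun s => Y s /\ s q = true), (fun s => Y s /\ s q = false).
  split; [| split]; [| intros s [_ H]; exact H ..].
  intro s; destruct (s q); intuition discriminate.
Qed.

Lemma cval_csubst (b : bool) (s : valuation L) (a : cform L) :
  s p = b -> cval s (csubst p (if b then CTrue L else CFalse L) a) = cval s a.
Proof.
  intro Hb; induction a as [r | | | a IH | a IHa a' IHa' | a IHa a' IHa'];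
    simpl; try congruence.
  destruct (leq_dec r p) as [-> |]; [rewrite Hb; destruct b |]; reflexivity.
Qed.

Lemma cvals_csubst (b : bool) (s : valuation L) (xs : list (cform L)) :
  s p = b -> cvals s (map (csubst p (if b then CTrue L else CFalse L)) xs) = cvals s xs.
Proof.
  intro Hb; unfold cvals; rewrite map_map.
  apply map_ext; intro a; apply cval_csubst, Hb.
Qed.

Lemma sat_tsubst_const (b : bool) (f : tform L) :
  forall Y : team L, (forall s, Y s -> s p = b) -> sat Y f -> sat Y (tsubst q p b f).
Proof.
  induction f as [r | r | | | xs y | xs ys | xs ys | f IHf g IHg
                 | f IHf g IHg | f IHf g IHg | f IHf g IHg];
    intros Y HY H; simpl in *.
  - destruct (leq_dec r p) as [-> |]; [| exact H].
    destruct b; [apply sat_ttop |].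
    intros s Hs; specialize (H s Hs); specialize (HY s Hs); congruence.
  - destruct (leq_dec r p) as [-> |]; [| exact H].
    destruct b; [| apply sat_ttop].
    intros s Hs; specialize (H s Hs); specialize (HY s Hs); congruence.
  - exact H.
  - exact H.
  - intros s s' Hs Hs' E.
    rewrite !cvals_csubst in E by auto; rewrite !cval_csubst by auto.
    apply H; assumption.
  - intros s Hs; destruct (H s Hs) as [s' [Hs' E]].
    exists s'; rewrite !cvals_csubst by auto; auto.
  - intros s s' Hs Hs'; destruct (H s s' Hs Hs') as [s'' [Hs'' E]].
    exists s''; rewrite !cvals_csubst by auto; auto.
  - destruct H; split; auto.
  - destruct H as [X1 [X2 [U [H1 H2]]]].
    exists X1, X2; split; [exact U | split].
    + apply IHf; [intros s Hs; apply HY, U; auto | exact H1].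
    + apply IHg; [intros s Hs; apply HY, U; auto | exact H2].
  - destruct H; [left | right]; auto.
  - destruct H as [H | [X1 [X2 [N1 [N2 [U [H1 H2]]]]]]]; [left; exact H | right].
    exists X1, X2; split; [exact N1 | split; [exact N2 | split; [exact U | split]]].
    + apply IHf; [intros s Hs; apply HY, U; auto | exact H1].
    + apply IHg; [intros s Hs; apply HY, U; auto | exact H2].
Qed.

End Substitution.

Theorem mainTheorem1 (L : Type) (q p : L) (phi : tform L) :
  downward_closed phi ->
  entails phi (TTensor (tsubst q p true phi) (tsubst q p false phi)).
Proof.
  intros Hdown X H.
  exists (restrict p X true), (restrict p X false).
  split; [apply union_restrict | split].
  - apply sat_tsubst_const; [apply restrict_const |].
    apply (Hdown X); [exact H | apply restrict_sub].
  - apply sat_tsubst_const; [apply restrict_const |].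
    apply (Hdown X); [exact H | apply restrict_sub].
Qed.
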